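(* Let $A=(a,ha-d,ha+d)$ with $d,h\in\mathbb{P}$, $\gcd(a,d)=1$, $ha-d>1$, and $r_1=\lfloor\frac{ha-d}{2h}\rfloor$. Then $$\sum_{r=0}^{a-1}x^{N_r}=\frac{1-x^{(ha+d)(r_1+1)}}{1-x^{ha+d}}+\frac{x^{ha-d}\big(1-x^{(ha-d)(a-r_1-1)}\big)}{1-x^{ha-d}}.$$
   Context: For $A=(a,c_1,\dots,c_m)$ of positive integers with $\gcd(A)=1$ and $0\le r\le a-1$, $N_r$ is the least nonnegative integer $a_0\equiv r\pmod a$ that can be written as $\sum_{i=1}^m c_ix_i$ with all $x_i$ nonnegative integers. $\mathbb{P}=\{1,2,\dots\}$. *)

From HB Require Import structures.
From mathcomp Require Import all_boot all_order all_algebra.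
From Stdlib Require Import ClassicalEpsilon.
Set Implicit Arguments. Unset Strict Implicit. Unset Printing Implicit Defensive.
Import Order.TTheory GRing.Theory Num.Theory.

Definition representable (c : seq nat) (n : nat) : Prop :=
  exists xs : seq nat, size xs = size c /\
    n = \sum_(i < size c) nth 0 c i * nth 0 xs i.

Definition candN (a : nat) (c : seq nat) (r : nat) (n : nat) : bool :=
  if excluded_middle_informative (n = r %[mod a] /\ representable c n)
  then true else false.

(* N_r for A = (a, c_1, ..., c_m): least nonnegative a0 = r (mod a)
   representable by c (default 0 if no such a0 exists; never happens when
   gcd(A) = 1). *)
Definition frobN (a : nat) (c : seq nat) (r : nat) : nat :=
  match excluded_middle_informative (exists n, candN a c r n) with
  | left H => @ex_minn (candN a c r) H
  | right _ => 0%N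
  end.

From HB Require Import structures.
From mathcomp Require Import all_boot all_order all_algebra.
From mathcomp Require Import zify.
From Stdlib Require Import ClassicalEpsilon.
Import Order.TTheory GRing.Theory Num.Theory.

(* Modulo a, the generators are ha - d = -d and ha + d = d, and d is invertible, so
   the residues are exactly the d k mod a with k < a. If (ha - d) x + (ha + d) y = d k
   (mod a) then y = k + x (mod a), so either y >= k or x >= a - k; hence
   N_(dk mod a) = min((ha + d) k, (ha - d)(a - k)), and the first term is the smaller
   one exactly when k <= r1. The sum thus splits into two geometric series. *)

Lemma candNP a c r n :
  reflect (n = r %[mod a] /\ representable c n) (candN a c r n).
Proof. by rewrite /candN; case: excluded_middle_informative => h; constructor. Qed.

Lemma frobN_least a c r v :
  v = r %[mod a] -> representable c v ->
  (forall n, n = r %[mod a] -> representable c n -> v <= n) ->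
  frobN a c r = v.
Proof.
move=> vr cv v_min; have cand_v : candN a c r v by apply/candNP.
rewrite /frobN; case: excluded_middle_informative => [ex | []]; last by exists v.
case: ex_minnP => m /candNP[mr cm] m_min.
by apply/eqP; rewrite eqn_leq m_min // v_min.
Qed.

Lemma representable2P A B n :
  representable [:: A; B] n <-> exists x y, n = A * x + B * y.
Proof.
rewrite /representable; split => [[xs [_ ->]] | [x [y ->]]].
  by exists (nth 0 xs 0), (nth 0 xs 1); rewrite !big_ord_recl big_ord0 addn0.
by exists [:: x; y]; rewrite !big_ord_recl big_ord0 addn0.
Qed.

Lemma eqn_modMl_coprime a d u v :
  coprime a d -> (d * u == d * v %[mod a]) = (u == v %[mod a]).
Proof.
move=> co; wlog vu : u v / v <= u.
  by move=> W; case: (leqP v u) => [|/ltnW] ?; last rewrite eq_sym [RHS]eq_sym; apply: W.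
by rewrite !eqn_mod_dvd ?leq_mul2l ?vu ?orbT // -mulnBr Gauss_dvdr.
Qed.

Lemma big_mulmod_coprime (R : Type) (idx : R) (op : Monoid.com_law idx)
    a d (F : nat -> R) :
  coprime a d -> \big[op/idx]_(r < a) F r = \big[op/idx]_(k < a) F (d * k %% a).
Proof.
case: a => [|a] co; first by rewrite !big_ord0.
have mul_inj : injective (fun k : 'I_a.+1 => inZp (d * k) : 'I_a.+1).
  move=> k1 k2 /(congr1 val) /eqP /=.
  by rewrite eqn_modMl_coprime // !modn_small // => /eqP/val_inj.
by rewrite (reindex_inj mul_inj).
Qed.

Section TwoGenerators.

Variables a d A B : nat.
Hypotheses (coad : coprime a d) (AdE : A + d = 0 %[mod a]) (BdE : B = d %[mod a]).

Lemma two_gens_modE x y : A * x + B * y + d * x = d * y %[mod a].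
Proof.
rewrite addnAC -mulnDl -modnDml -modnMml AdE modnMml mul0n mod0n add0n.
by rewrite -modnMml BdE modnMml.
Qed.

Lemma two_gens_lower k x y : A * x + B * y = d * k %[mod a] ->
  minn (B * k) (A * (a - k)) <= A * x + B * y.
Proof.
move=> nE.
have dE : d * (k + x) = d * y %[mod a].
  by rewrite mulnDr -modnDml -nE modnDml two_gens_modE.
have /eqP kxE : k + x == y %[mod a].
  by rewrite -(@eqn_modMl_coprime a d) //; apply/eqP.
case: (leqP k y) => [ky | yk].
  by rewrite geq_min; apply/orP; left; apply: leq_trans _ (leq_addl _ _);
    rewrite leq_mul2l ky orbT.
have : a %| k + x - y by rewrite -eqn_mod_dvd ?kxE // ltnW // ltn_addr.
move/dvdn_leq; rewrite subn_gt0 ltn_addr // => /(_ isT) ax.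
rewrite geq_min; apply/orP; right; apply: leq_trans _ (leq_addr _ _).
by rewrite leq_mul2l leq_subLR (leq_trans ax (leq_subr _ _)) orbT.
Qed.

Lemma frobN_two_gens k : k <= a ->
  frobN a [:: A; B] (d * k %% a) = minn (B * k) (A * (a - k)).
Proof.
move=> ka; apply: frobN_least.
- rewrite modn_mod; case: leqP => _; first by rewrite -modnMml BdE modnMml.
  have -> : A * (a - k) = (A + d) * (a - k) + d * k %[mod a].
    by rewrite mulnDl -addnA -mulnDr subnK // addnC modnMDl.
  by rewrite -modnDml -modnMml AdE modnMml mul0n mod0n add0n.
- by apply/representable2P; case: leqP => _; [exists 0, k | exists (a - k), 0];
    rewrite muln0 ?addn0.
- move=> n; rewrite modn_mod => nE /representable2P[x [y nxy]].
  by rewrite nxy two_gens_lower -?nxy.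
Qed.

End TwoGenerators.

Lemma minn_two_gens_threshold h a A B k :
  0 < a -> 0 < h -> A + B = 2 * h * a -> k <= a ->
  minn (B * k) (A * (a - k)) = if k <= A %/ (2 * h) then B * k else A * (a - k).
Proof.
move=> a0 h0 ABE ka.
have BkA : (B * k <= A * (a - k)) = (k * (2 * h) <= A).
  rewrite -(leq_add2r (A * k)) -mulnDr subnK // -mulnDl [B + A]addnC ABE.
  by rewrite mulnAC leq_pmul2r // mulnC.
rewrite leq_divRL ?muln_gt0 // -BkA.
by case: leqP => [/minn_idPl | /ltnW/minn_idPr].
Qed.

Lemma sum_expr_threshold (R : pzSemiRingType) (x : R) (a r A B : nat) : r < a ->
  (\sum_(k < a) x ^+ (if k <= r then B * k else A * (a - k))%N
  = \sum_(i < r.+1) (x ^+ B) ^+ i + x ^+ A * \sum_(i < a - r.+1) (x ^+ A) ^+ i)%R.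
Proof.
move=> ra; pose f k := (x ^+ (if k <= r then B * k else A * (a - k))%N)%R.
rewrite -(big_mkord xpredT f) (big_cat_nat (leq0n r.+1) ra) /=.
congr (_ + _)%R.
  by rewrite big_mkord; apply: eq_bigr => i _; rewrite /f -ltnS ltn_ord exprM.
rewrite -{1}(add0n r.+1) big_addn big_nat_rev big_mkord mulr_sumr /=.
apply: eq_bigr => i _; rewrite /f -exprS -exprM.
have ilt := ltn_ord i.
have -> : 0 + (a - r.+1) - i.+1 + r.+1 = a - i.+1 by lia.
by rewrite ifN ?subKn //; lia.
Qed.

Lemma sum_expr_geom (F : fieldType) (y : F) n : (1 - y != 0)%R ->
  (\sum_(i < n) y ^+ i = (1 - y ^+ n) / (1 - y))%R.
Proof.
move=> y1; apply: (mulIf y1).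
by rewrite divfK // -[RHS]opprB subrX1 -mulNr opprB mulrC.
Qed.

Theorem mainTheorem13 (a d h : nat) :
  (0 < a)%N -> (0 < d)%N -> (0 < h)%N -> coprime a d -> (1 < h * a - d)%N ->
  let r1 := ((h * a - d) %/ (2 * h))%N in
  forall (F : fieldType) (x : F),
    (1 - x ^+ (h * a + d)%N != 0)%R -> (1 - x ^+ (h * a - d)%N != 0)%R ->
    (\sum_(r < a) x ^+ (frobN a [:: (h * a - d)%N; (h * a + d)%N] r)
     = (1 - x ^+ ((h * a + d) * (r1 + 1))%N) / (1 - x ^+ (h * a + d)%N)
       + x ^+ (h * a - d)%N * (1 - x ^+ ((h * a - d) * (a - r1 - 1))%N)
         / (1 - x ^+ (h * a - d)%N))%R.
Proof.
move=> a0 _ h0 co d_lt r1 F x nzB nzA.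
set A := h * a - d; set B := h * a + d.
have AdE : A + d = h * a by rewrite subnK // ltnW // -subn_gt0 ltnW.
have AdE_mod : A + d = 0 %[mod a] by rewrite AdE modnMl mod0n.
have BdE_mod : B = d %[mod a] by rewrite modnMDl.
have ABE : A + B = 2 * h * a by rewrite addnCA AdE -mulnA mul2n addnn.
have r1_lt_a : r1 < a.
  by rewrite /r1 ltn_divLR ?muln_gt0 // -AdE mulnCA mulnA mul2n; lia.
rewrite (@big_mulmod_coprime _ _ _ a d (fun r => x ^+ frobN a [:: A; B] r)%R co).
under eq_bigr => k _ do
  rewrite frobN_two_gens ?(minn_two_gens_threshold h) ?(ltnW (ltn_ord k)) //.
rewrite sum_expr_threshold // !sum_expr_geom // -!exprM mulrA.
by rewrite addn1 subn1 subnS.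
Qed.
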